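(* Let $m\ge2$, $n\ge1$, $k\ge1$ an integer and $\mathcal{A}\in\mathbb{C}^{[m,n]}$. Then $R(\mathcal{A}^k)\le (R(\mathcal{A}))^{\mu_k}$, where $\mu_k=\frac{(m-1)^k-1}{m-2}$ if $m>2$ and $\mu_k=k$ if $m=2$.
   Context: $[n]=\{1,\ldots,n\}$. $\mathbb{C}^{[m,n]}$ denotes the set of order $m$, dimension $n$ complex tensors $\mathcal{A}=(a_{i_1\cdots i_m})$, $i_j\in[n]$. For a tensor $\mathcal{T}=(t_{i_1\cdots i_p})$ of order $p$ and dimension $n$: $r_i(\mathcal{T})=\sum_{i_2,\ldots,i_p=1}^n|t_{ii_2\cdots i_p}|$ and $R(\mathcal{T})=\max_{i\in[n]}r_i(\mathcal{T})$. General product: for $\mathcal{A}\in\mathbb{C}^{[m,n]}$ ($m\ge2$) and $\mathcal{B}\in\mathbb{C}^{[q,n]}$ ($q\ge1$), $\mathcal{A}\mathcal{B}=(c_{i\alpha_1\cdots\alpha_{m-1}})$ is the order $(m-1)(q-1)+1$, dimension $n$ tensor with $c_{i\alpha_1\cdots\alpha_{m-1}}=\sum_{i_2,\ldots,i_m=1}^n a_{ii_2\cdots i_m}b_{i_2\alpha_1}\cdots b_{i_m\alpha_{m-1}}$, $i\in[n]$, $\alpha_j\in[n]^{q-1}$ (where $b_{j\alpha}$ with $\alpha=(j_2,\ldots,j_q)$ means $b_{jj_2\cdots j_q}$). Powers: $\mathcal{A}^1=\mathcal{A}$ and $\mathcal{A}^{j+1}=\mathcal{A}\mathcal{A}^j$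 (general product; this product is associative). *)

From HB Require Import structures.
From mathcomp Require Import all_boot all_order all_algebra.
From mathcomp Require Import reals.
From mathcomp Require Export complex.
Set Implicit Arguments. Unset Strict Implicit. Unset Printing Implicit Defensive.
Import Order.TTheory GRing.Theory Num.Theory.
Local Open Scope ring_scope.

(* A tensor of order p.+1 and dimension n over C: entry t_{i i_2 ... i_{p+1}}
   is written  T i s  with  s = (i_2,...,i_{p+1}) : p.-tuple 'I_n. *)
Definition tensor (C : Type) (p n : nat) := 'I_n -> p.-tuple 'I_n -> C.

Section Tensors.
Variables (R : realType) (n : nat).
Notation C := (R[i]).

Definition row_abs_sum (p : nat) (T : tensor C p n) (i : 'I_n) : C :=
  \sum_(s : p.-tuple 'I_n) `|T i s|.

(* R(T) = max_i r_i(T)  (all r_i are >= 0, so 0 is a neutral start) *)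
Definition Rmax (p : nat) (T : tensor C p n) : C :=
  \big[Num.max/0]_(i < n) row_abs_sum T i.

Local Open Scope nat_scope.
Lemma blk_lt (a b : nat) (j : 'I_a) (l : 'I_b) : (j * b + l < a * b)%N.
Proof.
case: j l => j Hj [l Hl] /=.
apply: (@leq_trans ((j.+1) * b)); first by rewrite mulSn addnC ltn_add2r.
by rewrite leq_mul2r Hj orbT.
Qed.
Local Open Scope ring_scope.

Definition block (a b : nat) (t : (a * b).-tuple 'I_n) (j : 'I_a) : b.-tuple 'I_n :=
  [tuple tnth t (Ordinal (blk_lt j l)) | l < b].

(* General product of A (order m'.+1) and B (order q'.+1): order (m' * q').+1,
   c_{i alpha_1 ... alpha_{m'}} = sum_{i_2..i_m} a_{i i_2..i_m} prod_j b_{i_{j+1} alpha_j} *)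
Definition tprod (m' q' : nat) (A : tensor C m' n) (B : tensor C q' n)
  : tensor C (m' * q') n :=
  fun i t => \sum_(s : m'.-tuple 'I_n)
               A i s * \prod_(j < m') B (tnth s j) (block t j).

(* tord d j = (order of A^{j+1}) - 1 for A of order d.+1, i.e. d^(j+1) *)
Fixpoint tord (d j : nat) : nat := if j is j'.+1 then d * tord d j' else d.

(* tpow' A j = A^{j+1};  A^1 = A,  A^{j+1} = A A^j *)
Fixpoint tpow' (d : nat) (A : tensor C d n) (j : nat) : tensor C (tord d j) n :=
  match j return tensor C (tord d j) n with
  | 0 => A
  | j'.+1 => tprod A (@tpow' d A j')
  end.

Definition tpow (d : nat) (A : tensor C d n) (k : nat) : tensor C (tord d k.-1) n :=
  @tpow' d A k.-1.
End Tensors.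
Arguments row_abs_sum {R n p} T i.
Arguments Rmax {R n p} T.
Arguments tprod {R n m' q'} A B i t.
Arguments tpow' {R n d} A j.
Arguments tpow {R n d} A k.

Definition mu (m k : nat) : nat := (
  if 2 < m then ((m - 1) ^ k - 1) %/ (m - 2) else k)%N.

(* Each row sum of a general product is controlled by submultiplicativity:
   expanding |c_{i alpha}| and regrouping the multi-index alpha into its m-1
   blocks gives R(A B) <= R(A) R(B)^(m-1).  Iterating along A^(j+1) = A A^j,
   the exponent e_j of R(A) obeys e_1 = 1 and e_(j+1) = 1 + (m-1) e_j, whose
   solution is mu_j. *)
From HB Require Import structures.
From mathcomp Require Import all_boot all_order all_algebra.
From mathcomp Require Import reals complex.
From mathcomp Require Import zify.
Import Order.TTheory GRing.Theory Num.Theory.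
Local Open Scope ring_scope.

Section NonnegBigmax.
Variables (R : numDomainType) (I : eqType) (f : I -> R).
Hypothesis f_ge0 : forall i, 0 <= f i.

Lemma bigmax_nneg_ge0 (r : seq I) : 0 <= \big[Num.max/0]_(i <- r) f i.
Proof.
elim/big_ind: _ => // x y x_ge0 y_ge0.
by rewrite comparable_le_max ?x_ge0 // real_comparable ?ger0_real.
Qed.

Lemma le_bigmax_nneg (r : seq I) j : j \in r -> f j <= \big[Num.max/0]_(i <- r) f i.
Proof.
elim: r => // i r IHr; rewrite inE big_cons.
have cmp : f i >=< \big[Num.max/0]_(i <- r) f i.
  by rewrite real_comparable ?ger0_real ?bigmax_nneg_ge0.
by rewrite comparable_le_max // => /predU1P[->|/IHr->]; rewrite ?lexx ?orbT.
Qed.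

End NonnegBigmax.

Section RowSums.
Variables (R : realType) (n : nat).
Notation C := (R[i]).
Implicit Types (p : nat).

Lemma row_abs_sum_ge0 p (T : tensor C p n) i : 0 <= row_abs_sum T i.
Proof. by apply: sumr_ge0 => s _; rewrite normr_ge0. Qed.

Lemma Rmax_ge0 p (T : tensor C p n) : 0 <= Rmax T.
Proof. exact/bigmax_nneg_ge0/row_abs_sum_ge0. Qed.

Lemma le_row_abs_sum_Rmax p (T : tensor C p n) i : row_abs_sum T i <= Rmax T.
Proof. exact/le_bigmax_nneg/mem_index_enum/row_abs_sum_ge0. Qed.

Lemma Rmax_le p (T : tensor C p n) c :
  0 <= c -> (forall i, row_abs_sum T i <= c) -> Rmax T <= c.
Proof. by move=> c_ge0 le_c; apply: bigmax_le. Qed.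

End RowSums.

Section Blocks.
Variables (n a b : nat).

Lemma block_inj : injective (fun t : (a * b).-tuple 'I_n => [ffun j => block t j]).
Proof.
move=> t1 t2 /ffunP eq_blocks; apply: eq_from_tnth => x.
have b_gt0 : (0 < b)%N by case: b t1 t2 eq_blocks x => // ? ? ? []; rewrite muln0.
have x_div : (x %/ b < a)%N by rewrite ltn_divLR // ltn_ord.
have x_mod : (x %% b < b)%N by rewrite ltn_pmod.
have -> : x = Ordinal (blk_lt (Ordinal x_div) (Ordinal x_mod)).
  by apply: val_inj; rewrite /= -divn_eq.
have := congr1 (fun u => tnth u (Ordinal x_mod)) (eq_blocks (Ordinal x_div)).
by rewrite !ffunE !tnth_mktuple.
Qed.

(* The block decomposition embeds (a*b)-tuples into the index set of the
   expanded product on the right, whose other terms are nonnegative. *)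
Lemma sum_prod_blocks_le (R : numDomainType) (F : 'I_a -> b.-tuple 'I_n -> R) :
  (forall j u, 0 <= F j u) ->
  \sum_(t : (a * b).-tuple 'I_n) \prod_(j < a) F j (block t j)
    <= \prod_(j < a) \sum_(u : b.-tuple 'I_n) F j u.
Proof.
move=> F_ge0; rewrite bigA_distr_bigA /=.
set blocks := fun t : (a * b).-tuple 'I_n => [ffun j => block t j].
set S := [set blocks t | t in [set: (a * b).-tuple 'I_n]].
have -> : \sum_(t : (a * b).-tuple 'I_n) \prod_(j < a) F j (block t j)
          = \sum_(f in S) \prod_(j < a) F j (f j).
  rewrite big_imset /=; last by move=> t1 t2 _ _ /block_inj.
  by apply: eq_big => [t|t _]; [rewrite in_setT | apply: eq_bigr => j _; rewrite ffunE].
rewrite [leRHS](bigID (mem S)) /= lerDl.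
by apply: sumr_ge0 => f _; apply: prodr_ge0.
Qed.

End Blocks.
Arguments sum_prod_blocks_le {n a b R F}.

Lemma Rmax_tprod (R : realType) (n m' q' : nat)
    (A : tensor R[i] m' n) (B : tensor R[i] q' n) :
  Rmax (tprod A B) <= Rmax A * Rmax B ^+ m'.
Proof.
apply: Rmax_le => [|i]; first by rewrite mulr_ge0 ?exprn_ge0 ?Rmax_ge0.
have expand : row_abs_sum (tprod A B) i <=
    \sum_(s : m'.-tuple 'I_n) `|A i s| *
      \sum_(t : (m' * q').-tuple 'I_n) \prod_(j < m') `|B (tnth s j) (block t j)|.
  under eq_bigr do rewrite mulr_sumr; rewrite exchange_big /=.
  apply: ler_sum => t _; apply: le_trans (ler_norm_sum _ _ _) _.
  by apply: ler_sum => s _; rewrite normrM normr_prod.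
have -> : Rmax B ^+ m' = \prod_(j < m') Rmax B by rewrite prodr_const card_ord.
apply: (le_trans expand).
apply: (@le_trans _ _ (\sum_(s : m'.-tuple 'I_n) `|A i s| * \prod_(j < m') Rmax B)).
  apply: ler_sum => s _; apply: ler_wpM2l; first exact: normr_ge0.
  have B_ge0 j u : 0 <= `|B (tnth s j) u| by apply: normr_ge0.
  apply: le_trans (sum_prod_blocks_le B_ge0) _.
  by apply: ler_prod => j _; rewrite sumr_ge0 ?le_row_abs_sum_Rmax.
rewrite -mulr_suml ler_wpM2r ?le_row_abs_sum_Rmax //.
by apply: prodr_ge0 => j _; apply: Rmax_ge0.
Qed.

Lemma mu1 m : mu m 1 = 1%N.
Proof.
by rewrite /mu expn1 -subnDA; case: ltnP => // m_gt2; rewrite divnn subn_gt0 m_gt2.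
Qed.

Lemma muS m k : (2 <= m)%N -> mu m k.+1 = (mu m k * m.-1).+1.
Proof.
move=> m_ge2; rewrite /mu; case: (ltnP 2 m) => [|m_le2]; last first.
  have -> : m = 2%N by apply/eqP; rewrite eqn_leq m_le2.
  by rewrite muln1.
case: m m_ge2 => [|[|[|d]]] // _ _; rewrite subn1 subn2.
have [q def_q] : exists q, (d.+2 ^ k = (q * d.+1).+1)%N.
  elim: k => [|k [q def_q]]; first by exists 0%N.
  by exists (d.+2 * q + 1)%N; rewrite expnS def_q; nia.
rewrite -[(d.+3 - 1)%N]/d.+2 expnS def_q !subn1 succnK.
have -> : ((d.+2 * (q * d.+1).+1).-1 = (d.+2 * q).+1 * d.+1)%N by nia.
by rewrite !mulnK // mulnC.
Qed.

Lemma Rmax_tpow' (R : realType) (m n j : nat) (A : tensor R[i] m.-1 n) :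
  (2 <= m)%N -> Rmax (tpow' A j) <= Rmax A ^+ mu m j.+1.
Proof.
move=> m_ge2; elim: j => [|j IHj]; first by rewrite mu1 expr1.
rewrite muS // exprS exprM; apply: le_trans; first exact: Rmax_tprod.
apply: ler_wpM2l; first exact: Rmax_ge0.
apply: lerXn2r IHj; rewrite nnegrE; last exact/exprn_ge0/Rmax_ge0.
exact: Rmax_ge0.
Qed.

Theorem corollary2p5 (R : realType) (m n k : nat) (A : tensor R[i] m.-1 n) :
  (2 <= m)%N -> (1 <= n)%N -> (1 <= k)%N ->
  Rmax (tpow A k) <= Rmax A ^+ mu m k.
Proof. move=> m_ge2 _; case: k => [//|k] _; exact: Rmax_tpow'. Qed.
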